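(* Let $G$ be a graph with $n$ vertices and $m\ge 1$ edges. Then $$EE(G) > e^{R_{1/2}/m} + (n-1) - \frac{R_{1/2}}{m},$$ where $R_{1/2}=R_{1/2}(G)$.
   Context: All graphs are finite, simple and undirected. For a graph $G$ with adjacency matrix $A(G)$ having eigenvalues $\lambda_1\ge\cdots\ge\lambda_n$, the Estrada index is $EE(G)=\sum_{i=1}^n e^{\lambda_i}$. Writing $d(i)$ for the degree of vertex $i$ and $\mathcal{E}(G)$ for the edge set, $R_\alpha(G)=\sum_{ij\in\mathcal{E}(G)}(d(i)d(j))^\alpha$; in particular $R_{1/2}(G)=\sum_{ij\in\mathcal{E}(G)}\sqrt{d(i)d(j)}$. *)

From Stdlib Require Import Reals List Arith Bool.
Import ListNotations.
Open Scope R_scope.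

Fixpoint sumR (n : nat) (f : nat -> R) : R :=
  match n with O => 0 | S k => sumR k f + f k end.
Fixpoint sumN (n : nat) (f : nat -> nat) : nat :=
  match n with O => 0%nat | S k => (sumN k f + f k)%nat end.

(* A simple graph on vertices 0..n-1, given by a boolean adjacency relation. *)
Definition simple_graph (adj : nat -> nat -> bool) : Prop :=
  (forall i j, adj i j = adj j i) /\ (forall i, adj i i = false).

Definition deg (n : nat) (adj : nat -> nat -> bool) (i : nat) : nat :=
  sumN n (fun j => if adj i j then 1%nat else 0%nat).

Definition num_edges (n : nat) (adj : nat -> nat -> bool) : nat :=
  sumN n (fun i => sumN n (fun j => if andb (i <? j)%nat (adj i j) then 1%nat else 0%nat)).

Definition randic_half (n : nat) (adj : nat -> nat -> bool) : R :=
  sumR n (fun i => sumR n (fun j =>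
    if andb (i <? j)%nat (adj i j) then sqrt (INR (deg n adj i * deg n adj j)) else 0)).

Definition adj_matrix (adj : nat -> nat -> bool) (i j : nat) : R :=
  if adj i j then 1 else 0.

Definition minor (M : nat -> nat -> R) (j : nat) (r c : nat) : R :=
  M (S r) (if (c <? j)%nat then c else S c).
Fixpoint det (n : nat) (M : nat -> nat -> R) : R :=
  match n with
  | O => 1
  | S k => sumR (S k) (fun j => (-1) ^ j * M O j * det k (minor M j))
  end.

Definition char_poly (n : nat) (A : nat -> nat -> R) (x : R) : R :=
  det n (fun i j => (if Nat.eqb i j then x else 0) - A i j).

Definition is_spectrum (n : nat) (A : nat -> nat -> R) (L : list R) : Prop :=
  length L = n /\
  forall x, char_poly n A x = fold_right (fun l acc => (x - l) * acc) 1 L.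

Definition estrada (L : list R) : R := fold_right (fun l acc => exp l + acc) 0 L.

(* Let x be the vector of square roots of the degrees. Its Rayleigh quotient for the
   adjacency matrix is 2 R_{1/2} / 2m, so the largest eigenvalue l satisfies
   l >= t := R_{1/2}/m, and t > 0 since each edge contributes sqrt(d_i d_j) >= 1.
   As tr A = 0 the other eigenvalues sum to -l <> 0, hence by e^x >= 1 + x (strict
   for x <> 0) their exponentials sum to more than (n - 1) - l. Finally e^x - x is
   increasing on [0, +oo), so e^l - l >= e^t - t. *)

From Pilot Require Import Defs.
From Stdlib Require Import Reals.
From mathcomp Require Import all_boot all_order all_algebra complex Rstruct lra.
Set Implicit Arguments. Unset Strict Implicit. Unset Printing Implicit Defensive.
Import Order.TTheory GRing.Theory Num.Theory.

Local Open Scope ring_scope.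

Section Rayleigh.
Local Open Scope complex_scope.
Local Open Scope sesquilinear_scope.
Variable K : rcfType.
Local Notation C := (complex K).
Local Notation toC := (real_complex K).

Lemma real_complex_le (a b : K) : (toC a <= toC b) = (a <= b).
Proof. by rewrite lecE /= eqxx. Qed.

Lemma hermitian_rayleigh_le n (A : 'M[C]_n) : (0 < n)%N -> A^t* = A ->
  exists2 e, eigenvalue A e &
    forall x : 'rV_n, (x *m A *m x^t*) 0 0 <= e * (x *m x^t*) 0 0.
Proof.
move=> n_gt0 AH.
pose P := spectralmx A; pose d := spectral_diag A.
have P_unitary : P \is unitarymx := spectral_unitarymx A.
have PtP : P^t* *m P = 1%:M.
  by rewrite -invmx_unitary // mulVmx // unitarymx_unit.
have PPt : P *m P^t* = 1%:M by apply/unitarymxP.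
have A_diag : A = P^t* *m diag_mx d *m P.
  by rewrite -invmx_unitary //; apply/orthomx_spectralP; rewrite qualifE AH.
have d_real : d \is a realmx.
  by apply: hermitian_spectral_diag_real; apply/is_hermitianmxP; rewrite expr0 scale1r AH.
have d_ReK j : toC (complex.Re (d 0 j)) = d 0 j.
  by apply: RRe_real; apply: (mxOverP d_real).
pose i0 := [arg max_(i > Ordinal n_gt0) complex.Re (d 0 i)]%O.
have d_le j : d 0 j <= d 0 i0.
  by rewrite -d_ReK -(d_ReK i0) real_complex_le /i0; case: arg_maxP => // k _; apply.
exists (d 0 i0).
  apply/eigenvalueP; exists (row i0 P).
    rewrite -row_mul A_diag !mulmxA PPt mul1mx mul_diag_mx; apply/rowP => j.
    by rewrite !mxE.
  apply/negP => /eqP row0.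
  have := congr1 (row i0) PPt; rewrite row_mul row0 mul0mx => /rowP/(_ i0).
  by rewrite !mxE eqxx => /eqP; rewrite eq_sym oner_eq0.
move=> x; pose y := x *m P^t*.
have yt : y^t* = P *m x^t* by rewrite /y trmx_mul map_mxM trmxCK.
have -> : x *m A *m x^t* = y *m diag_mx d *m y^t* by rewrite yt A_diag /y !mulmxA.
have -> : x *m x^t* = y *m y^t* by rewrite yt /y mulmxA -(mulmxA x) PtP mulmx1.
rewrite !mxE mulr_sumr; apply: ler_sum => j _.
rewrite mul_mx_diag !mxE [_ * d 0 j]mulrC -mulrA.
by apply: ler_wpM2r; [exact: mul_conjC_ge0 | exact: d_le].
Qed.

Lemma symmetric_rayleigh_le_root n (A : 'M[K]_n) (L : seq K) (x : 'rV_n) :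
  (0 < n)%N -> A^T = A -> char_poly A = \prod_(l <- L) ('X - l%:P) ->
  exists2 l, l \in L & (x *m A *m x^T) 0 0 <= l * (x *m x^T) 0 0.
Proof.
move=> n_gt0 A_sym charA.
have conj_real m p (M : 'M[K]_(m, p)) : (map_mx toC M)^t* = map_mx toC M^T.
  by apply/matrixP => i j; rewrite !mxE; exact: conjc_real.
have AcH : (map_mx toC A)^t* = map_mx toC A by rewrite conj_real A_sym.
have [e eig_e rayleigh] := hermitian_rayleigh_le n_gt0 AcH.
have : e \in map toC L.
  rewrite -root_prod_XsubC big_map -(map_prod_XsubC toC) -charA map_char_poly.
  by rewrite -eigenvalue_root_char.
case/mapP => l lL el; exists l => //.
have := rayleigh (map_mx toC x); rewrite el conj_real -!map_mxM !mxE.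
by rewrite -rmorphM real_complex_le.
Qed.

End Rayleigh.

Lemma sum_roots_char_poly (F : comNzRingType) n (A : 'M[F]_n) (L : seq F) :
  (0 < n)%N -> char_poly A = \prod_(l <- L) ('X - l%:P) -> \sum_(l <- L) l = \tr A.
Proof.
move=> n_gt0 charA.
have sizeL : size L = n by have := size_char_poly A; rewrite charA size_prod_XsubC => -[].
apply: oppr_inj; rewrite -char_poly_trace // charA -coefPn_prod_XsubC ?sizeL //.
by rewrite -lt0n.
Qed.

Lemma Nat_ltbE a b : Nat.ltb a b = (a < b)%N.
Proof. by apply/idP/idP => [/Nat.ltb_spec0/ssrnat.ltP | /ssrnat.ltP/Nat.ltb_spec0]. Qed.

Lemma Nat_eqbE a b : Nat.eqb a b = (a == b)%N.
Proof. by apply/idP/idP => [/Nat.eqb_spec -> | /eqP ->] //; rewrite Nat.eqb_refl. Qed.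

Lemma sumR_big n (F : nat -> R) : sumR n F = \sum_(i < n) F i.
Proof. by elim: n => [|n IH]; rewrite ?big_ord0 // big_ord_recr -IH. Qed.

Lemma sumN_big n (F : nat -> nat) : sumN n F = (\sum_(i < n) F i)%N.
Proof. by elim: n => [|n IH]; rewrite ?big_ord0 // big_ord_recr -IH. Qed.

Definition mx_of T n (M : nat -> nat -> T) : 'M[T]_n := \matrix_(i, j) M i j.

Lemma det_mx_of n (M : nat -> nat -> R) : det n M = \det (mx_of n M).
Proof.
elim: n M => [|n IH] M; first by rewrite det_mx00.
have -> : det n.+1 M = sumR n.+1 (fun j => pow (-1) j * M O j * det n (minor M j)) by [].
rewrite sumR_big (expand_det_row _ ord0); apply: eq_bigr => j _.
rewrite /cofactor IH RpowE mxE add0n -mulrA mulrCA.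
congr (_ * (_ * \det _)); apply/matrixP => r c.
by rewrite !mxE /minor Nat_ltbE /= /bump; case: ltnP.
Qed.

Lemma char_poly_mx_of n (A : nat -> nat -> R) x :
  Defs.char_poly n A x = (char_poly (mx_of n A)).[x].
Proof.
rewrite /Defs.char_poly det_mx_of /char_poly -horner_evalE -det_map_mx.
congr (\det _); apply/matrixP => i j; rewrite !mxE /= Nat_eqbE.
rewrite /horner_eval hornerD hornerN hornerC hornerMn hornerX.
case: (eqVneq i j) => [->|ne]; first by rewrite !eqxx mulr1n.
have ne_nat : (i == j :> nat) = false := negbTE ne.
by rewrite ne_nat mulr0n.
Qed.

Lemma eq_poly_horner (D : numDomainType) (p q : {poly D}) :
  (forall x, p.[x] = q.[x]) -> p = q.
Proof.
move=> pq; apply/eqP; rewrite -subr_eq0; apply/negPn/negP => nz.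
have roots : all (root (p - q)) [seq i%:R | i <- iota 0 (size (p - q))].
  by apply/allP => y _; rewrite /root hornerD hornerN pq subrr.
have uniq_nat : uniq [seq i%:R : D | i <- iota 0 (size (p - q))].
  by rewrite map_inj_uniq ?iota_uniq // => a b /eqP; rewrite eqr_nat => /eqP.
by have := max_poly_roots nz roots uniq_nat; rewrite size_map size_iota ltnn.
Qed.

Lemma is_spectrum_char_poly n (A : nat -> nat -> R) (L : list R) :
  is_spectrum n A L -> char_poly (mx_of n A) = \prod_(l <- L) ('X - l%:P).
Proof.
case=> _ charA; apply: eq_poly_horner => x; rewrite -char_poly_mx_of charA.
elim: L {charA} => [|a L IH]; first by rewrite big_nil hornerC.
by rewrite big_cons hornerM hornerXsubC -IH.
Qed.

Lemma estradaE (L : list R) : estrada L = \sum_(l <- L) exp l.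
Proof. by elim: L => [|a L IH]; rewrite ?big_nil ?big_cons //= IH. Qed.

Lemma exp_ge1Dx (x : R) : 1 + x <= exp x.
Proof. exact/RleP/exp_ineq1_le. Qed.

Lemma exp_gt1Dx (x : R) : x != 0 -> 1 + x < exp x.
Proof. by move/eqP => x_neq0; apply/RltP/exp_ineq1. Qed.

Lemma exp_subr_le (t u : R) : 0 <= t -> t <= u -> exp t - t <= exp u - u.
Proof.
move=> t_ge0 tu.
(* [exp] reads its argument in [R_scope]; [%R] keeps [u - t] a ring expression. *)
have exp_split : exp u = exp t * exp (u - t)%R.
  by rewrite -[exp t * _]/(Rmult _ _) -exp_plus RplusE addrC subrK.
have exp_t_ge1 : 1 <= exp t by have := exp_ge1Dx t; lra.
have exp_ut := exp_ge1Dx (u - t)%R.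
have : 0 <= exp t * (exp (u - t)%R - 1 - (u - t)).
  by apply: mulr_ge0; lra.
have : 0 <= (exp t - 1) * (u - t) by apply: mulr_ge0; lra.
rewrite exp_split; nra.
Qed.

Lemma sum_exp_ge (K : seq R) : (size K)%:R + \sum_(l <- K) l <= \sum_(l <- K) exp l.
Proof.
rewrite -sum1_size natr_sum -big_split; apply: ler_sum => l _; exact: exp_ge1Dx.
Qed.

Lemma sum_exp_gt (K : seq R) :
  \sum_(l <- K) l != 0 -> (size K)%:R + \sum_(l <- K) l < \sum_(l <- K) exp l.
Proof.
move=> sum_neq0.
have [l lK l_neq0] : exists2 l, l \in K & l != 0.
  apply/hasP; apply: contraNT sum_neq0 => /hasPn K0.
  by rewrite big_seq big1 // => l /K0; rewrite negbK => /eqP.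
have permK := perm_to_rem lK.
rewrite !(perm_big _ permK) (perm_size permK) /= !big_cons -natr1.
have := sum_exp_ge (rem l K); have := exp_gt1Dx l_neq0; lra.
Qed.

Lemma sum_exp_gt_of_sum0 (L : seq R) (l t : R) :
  l \in L -> \sum_(x <- L) x = 0 -> 0 < t -> t <= l ->
  exp t + (size L).-1%:R - t < \sum_(x <- L) exp x.
Proof.
move=> lL sum0 t_gt0 tl.
have permL := perm_to_rem lL.
move: sum0; rewrite !(perm_big _ permL) (perm_size permL) /= !big_cons => sum0.
have rest_neq0 : \sum_(x <- rem l L) x != 0 by apply/eqP; lra.
have := sum_exp_gt rest_neq0.
have := exp_subr_le (ltW t_gt0) tl; lra.
Qed.

Lemma sum_sym_zero_diag (V : nmodType) {n : nat} (F : nat -> nat -> V) :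
  (forall i, F i i = 0) -> (forall i j, F i j = F j i) ->
  \sum_(i < n) \sum_(j < n) F i j =
  (\sum_(i < n) \sum_(j < n) (if (i < j)%N then F i j else 0)) *+ 2.
Proof.
move=> F0 Fsym; pose G i j := if (i < j)%N then F i j else 0.
have FG i j : F i j = G i j + G j i.
  rewrite /G; case: ltngtP => [_|_|->]; rewrite ?addr0 ?add0r ?F0 //; exact: Fsym.
rewrite mulr2n [X in _ + X]exchange_big -big_split; apply: eq_bigr => i _ /=.
by rewrite -big_split; apply: eq_bigr => j _.
Qed.

Section SimpleGraph.
Variables (n : nat) (adj : nat -> nat -> bool).
Hypothesis adj_simple : simple_graph adj.

Let adj_sym i j : adj i j = adj j i. Proof. exact: adj_simple.1. Qed.
Let adj_irr i : adj i i = false. Proof. exact: adj_simple.2. Qed.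

Lemma degE i : (deg n adj i)%:R = \sum_(j < n) (adj i j)%:R :> R.
Proof. by rewrite /deg sumN_big natr_sum. Qed.

Lemma deg_gt0 i j : (j < n)%N -> adj i j -> (0 < deg n adj i)%N.
Proof.
move=> jn aij; rewrite /deg sumN_big (bigD1 (Ordinal jn)) //=.
by rewrite aij.
Qed.

Lemma sum_deg : \sum_(i < n) (deg n adj i)%:R = 2 * (num_edges n adj)%:R :> R.
Proof.
under eq_bigr do rewrite degE.
have diag0 i : (adj i i)%:R = 0 :> R by rewrite adj_irr.
have sym i j : (adj i j)%:R = (adj j i)%:R :> R by rewrite adj_sym.
rewrite (sum_sym_zero_diag diag0 sym) /num_edges sumN_big natr_sum mulr_natl.
congr (_ *+ 2); apply: eq_bigr => i _; rewrite sumN_big natr_sum.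
by apply: eq_bigr => j _; rewrite Nat_ltbE; case: ltnP.
Qed.

Definition sqrt_deg : 'rV[R]_n := \row_(i < n) sqrt (INR (deg n adj i)).

Lemma sqrt_deg_norm : (sqrt_deg *m sqrt_deg^T) 0 0 = 2 * (num_edges n adj)%:R.
Proof.
rewrite mxE -sum_deg; apply: eq_bigr => i _.
by rewrite !mxE -RmultE sqrt_sqrt ?INRE //; apply/RleP; rewrite ler0n.
Qed.

Lemma sqrt_deg_quad :
  (sqrt_deg *m mx_of n (adj_matrix adj) *m sqrt_deg^T) 0 0 = 2 * randic_half n adj.
Proof.
pose s i := sqrt (INR (deg n adj i)).
have -> : (sqrt_deg *m mx_of n (adj_matrix adj) *m sqrt_deg^T) 0 0 =
          \sum_(i < n) \sum_(j < n) s i * adj_matrix adj i j * s j.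
  rewrite mxE; under eq_bigr do rewrite mxE big_distrl /=.
  rewrite exchange_big; apply: eq_bigr => i _; apply: eq_bigr => j _.
  by rewrite !mxE.
have diag0 i : s i * adj_matrix adj i i * s i = 0.
  by rewrite /adj_matrix adj_irr mulr0 mul0r.
have sym i j : s i * adj_matrix adj i j * s j = s j * adj_matrix adj j i * s i.
  by rewrite /adj_matrix adj_sym mulrC [s i * _]mulrC mulrA.
rewrite (sum_sym_zero_diag diag0 sym).
rewrite /randic_half sumR_big mulr_natl; congr (_ *+ 2).
apply: eq_bigr => i _; rewrite sumR_big; apply: eq_bigr => j _.
rewrite Nat_ltbE /adj_matrix /s; case: ltnP => //= _; case: (adj i j); rewrite ?mulr0 ?mul0r //.
by rewrite mulr1 -RmultE -sqrt_mult ?mult_INR //; exact: pos_INR.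
Qed.

Lemma num_edges_le_randic_half : (num_edges n adj)%:R <= randic_half n adj.
Proof.
rewrite /num_edges /randic_half sumN_big sumR_big natr_sum; apply: ler_sum => i _.
rewrite sumN_big sumR_big natr_sum; apply: ler_sum => j _.
case: ifP => [/andP [_ aij] | _]; last by [].
have di := deg_gt0 (ltn_ord j) aij.
have dj := deg_gt0 (ltn_ord i) (etrans (adj_sym j i) aij).
have -> : 1%:R = sqrt 1 by rewrite sqrt_1.
apply/RleP/sqrt_le_1_alt/RleP.
by rewrite INRE ler1n muln_gt0 di dj.
Qed.

End SimpleGraph.

Local Close Scope ring_scope.
Local Open Scope R_scope.

Theorem mainTheorem3 (n : nat) (adj : nat -> nat -> bool) (L : list R) :
  simple_graph adj ->
  (1 <= num_edges n adj)%coq_nat ->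
  is_spectrum n (adj_matrix adj) L ->
  estrada L >
    exp (randic_half n adj / INR (num_edges n adj)) + INR (n - 1)%coq_nat
    - randic_half n adj / INR (num_edges n adj).
Proof.
move=> simpleG /ssrnat.leP m_ge1 specL.
have n_gt0 : (0 < n)%N by case: n m_ge1 {specL}.
have charA := is_spectrum_char_poly specL.
have A_sym : ((mx_of n (adj_matrix adj))^T = mx_of n (adj_matrix adj))%R.
  by apply/matrixP => i j; rewrite !mxE /adj_matrix simpleG.1.
have [l lL] := symmetric_rayleigh_le_root (sqrt_deg n adj) n_gt0 A_sym charA.
rewrite sqrt_deg_quad // sqrt_deg_norm // => rayleigh.
have trace0 : (\sum_(x <- L) x = 0)%R.
  rewrite (sum_roots_char_poly n_gt0 charA) /mxtrace big1 // => i _.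
  by rewrite mxE /adj_matrix simpleG.2.
have m_gt0 : (0 < (num_edges n adj)%:R :> R)%R by rewrite ltr0n.
have m_le_R := num_edges_le_randic_half n simpleG.
have t_gt0 : (0 < randic_half n adj / (num_edges n adj)%:R)%R by rewrite divr_gt0 //; lra.
have t_le_l : (randic_half n adj / (num_edges n adj)%:R <= l)%R by rewrite ler_pdivrMr //; nra.
have := sum_exp_gt_of_sum0 lL trace0 t_gt0 t_le_l.
have -> : size L = n by case: specL => <- _; elim: L {lL trace0 charA} => //= a L ->.
by rewrite -estradaE -subn1 -!INRE -RdivE => /RltP.
Qed.
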